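(* Let $R,L,d>0$, $\alpha\in(0,1]$, $A\ge1$, and $\Sigma_1,\Sigma_2\in\mathscr{C}^{1,\alpha}_{m,n}(R,L,d)$ with $d_{\mathcal{H}}(\Sigma_1,\Sigma_2)<\min\{2^{-6}A^{-2}R^2,\ L^{-2/\alpha},\ 1\}$. If $x\in\Sigma_1$, $y\in\Sigma_2$ satisfy $|x-y|\le A\,d_{\mathcal{H}}(\Sigma_1,\Sigma_2)$, then $\angle(T_x\Sigma_1,T_y\Sigma_2)\le C_{ang}\,d_{\mathcal{H}}(\Sigma_1,\Sigma_2)^{\alpha/2}$ with $C_{ang}=C_{ang}(L,A)=L(1+(4A)^2)+2A$.
   Context: $\mathscr{C}^{1,\alpha}_{m,n}(R,L,d)$ is the set of compact $C^{1,\alpha}$ embedded $m$-dimensional submanifolds $\Sigma\subset\mathbb{R}^n$ such that: (i) $\Sigma\subset\overline{B}^n(0,d)$; (ii) for each $x\in\Sigma$ there is $f_x\in C^{1,\alpha}(T_x\Sigma,(T_x\Sigma)^\perp)$ with $\Sigma\cap B(x,R)=(x+\operatorname{graph}f_x)\cap B(x,R)$, $f_x(0)=0$, $Df_x(0)=0$; (iii) $\|Df_x(\xi)-Df_x(\eta)\|\le L|\xi-\eta|^\alpha$ for all $\xi,\eta\in T_x\Sigma$, and $\operatorname{lip}(f_x)\le1$. $d_{\mathcal{H}}(A,B)=\sup_{y\in A}\operatorname{dist}(y,B)+\sup_{z\in B}\operatorname{dist}(z,A)$. For linear subspaces $U,V$ of equal dimension, $\angle(U,V)=\|U_\natural-V_\natural\|$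 where $U_\natural$ is orthogonal projection onto $U$. *)

From HB Require Import structures.
From mathcomp Require Import ssreflect ssrfun ssrbool eqtype ssrnat seq fintype bigop.
From Stdlib Require Import Reals ClassicalEpsilon.

Set Implicit Arguments.
Unset Strict Implicit.
Unset Printing Implicit Defensive.

Local Open Scope R_scope.

Lemma Rplus_assoc_ssr : associative Rplus.
Proof. by move=> a b c; rewrite Rplus_assoc. Qed.
HB.instance Definition _ := Monoid.isComLaw.Build R 0%R Rplus Rplus_assoc_ssr Rplus_comm Rplus_0_l.

Definition vec (n : nat) := 'I_n -> R.

Definition vzero {n} : vec n := fun _ => 0.
Definition vadd {n} (u v : vec n) : vec n := fun i => u i + v i.
Definition vsub {n} (u v : vec n) : vec n := fun i => u i - v i.
Definition vscale {n} (c : R) (u : vec n) : vec n := fun i => c * u i.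
Definition dot {n} (u v : vec n) : R := \big[Rplus/0]_(i < n) (u i * v i).
Definition vnorm {n} (u : vec n) : R := sqrt (dot u u).

(* Real power with the convention 0^a = 0 (used only for a > 0 at base 0). *)
Definition rpow (x a : R) : R := if Rlt_dec 0 x then Rpower x a else 0.

(* Supremum of a set of reals (meaningful when nonempty and bounded above). *)
Definition Rsup (E : R -> Prop) : R :=
  epsilon (inhabits 0) (fun l => (bound E /\ exists r, E r) -> is_lub E l).
Definition Rinf (E : R -> Prop) : R := - Rsup (fun r => E (- r)).

Definition dist {n} (y : vec n) (B : vec n -> Prop) : R :=
  Rinf (fun r => exists b, B b /\ r = vnorm (vsub y b)).

Definition dH {n} (A B : vec n -> Prop) : R :=
  Rsup (fun r => exists y, A y /\ r = dist y B)
  + Rsup (fun r => exists z, B z /\ r = dist z A).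

Definition closed_set {n} (S : vec n -> Prop) : Prop :=
  forall z, (forall eps, 0 < eps -> exists y, S y /\ vnorm (vsub y z) < eps) -> S z.

(* Tangent space T_x S (tangent cone: limits of t (y - x), y in S, y -> x, t > 0).
   For the sets of the class below it is the usual tangent space. *)
Definition tangent_space {n} (S : vec n -> Prop) (x : vec n) : vec n -> Prop :=
  fun v => forall eps, 0 < eps -> exists y t, S y /\ 0 < t /\
     vnorm (vsub y x) < eps /\ vnorm (vsub (vscale t (vsub y x)) v) < eps.

Definition subspace_dim {n} (m : nat) (U : vec n -> Prop) : Prop :=
  exists e : 'I_m -> vec n,
    (forall i j, dot (e i) (e j) = if i == j then 1 else 0) /\
    forall v, U v <-> exists c : 'I_m -> R,
        v = (fun k => \big[Rplus/0]_(i < m) (c i * e i k)).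

Definition orthogonal_to {n} (U : vec n -> Prop) (w : vec n) : Prop :=
  forall u, U u -> dot u w = 0.

Definition linear_on {n} (U : vec n -> Prop) (T : vec n -> vec n) : Prop :=
  forall a b u v, U u -> U v -> T (vadd (vscale a u) (vscale b v)) = vadd (vscale a (T u)) (vscale b (T v)).

Definition has_derivative_on {n} (U : vec n -> Prop) (f : vec n -> vec n)
    (xi : vec n) (D : vec n -> vec n) : Prop :=
  linear_on U D /\
  forall eps, 0 < eps -> exists delta, 0 < delta /\
    forall eta, U eta -> vnorm (vsub eta xi) < delta ->
      vnorm (vsub (vsub (f eta) (f xi)) (D (vsub eta xi))) <= eps * vnorm (vsub eta xi).

(* The class  C^{1,alpha}_{m,n}(R,L,d)  (Rr plays the role of R).
   "compact" = closed and bounded (Heine-Borel); the C^{1,alpha} embedded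
   submanifold structure is provided by the local graph charts (ii)-(iii). *)
Definition C1a_class (m n : nat) (alpha Rr L d : R) (S : vec n -> Prop) : Prop :=
  closed_set S /\
  (forall x, S x -> vnorm x <= d) /\
  forall x, S x ->
    let T := tangent_space S x in
    subspace_dim m T /\
    exists (f : vec n -> vec n) (Df : vec n -> vec n -> vec n),
      (forall xi, T xi -> orthogonal_to T (f xi)) /\
      (forall xi, T xi -> has_derivative_on T f xi (Df xi)) /\
      (forall z, (S z /\ vnorm (vsub z x) < Rr) <->
                 ((exists xi, T xi /\ z = vadd x (vadd xi (f xi))) /\ vnorm (vsub z x) < Rr)) /\
      f vzero = vzero /\
      (forall h, T h -> Df vzero h = vzero) /\
      (forall xi eta h, T xi -> T eta -> T h ->
         vnorm (vsub (Df xi h) (Df eta h)) <= L * rpow (vnorm (vsub xi eta)) alpha * vnorm h) /\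
      (forall xi eta, T xi -> T eta -> vnorm (vsub (f xi) (f eta)) <= vnorm (vsub xi eta)).

Definition orth_proj {n} (U : vec n -> Prop) (v u : vec n) : Prop :=
  U u /\ orthogonal_to U (vsub v u).

(* angle(U,V) = || U_natural - V_natural ||  <=  c  (operator norm, unfolded) *)
Definition angle_le {n} (U V : vec n -> Prop) (c : R) : Prop :=
  forall v u1 u2, orth_proj U v u1 -> orth_proj V v u2 -> vnorm (vsub u1 u2) <= c * vnorm v.

(* Fix a scale [del > dH(S1,S2)] and put [r = sqrt del].  A vector [xi] of
   [T_x S1] of length [r] lifts to [z = x + xi + f1 xi] on [S1]; some [w] of
   [S2] lies within [del] of [z], and [|w - y| <= 4 A r] so [w] is read in the
   graph chart of [S2] at [y] as [y + eta + f2 eta].  The C^{1,alpha} Taylor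
   bound [|f u| <= L |u|^(1+alpha)] then gives [|xi - eta| <= C r^(1+alpha)]:
   [T_x S1] lies in [T_y S2] up to relative error [C r^alpha = C del^(alpha/2)],
   and symmetrically.  Two subspaces each nearly contained in the other have
   orthogonal projections that differ by at most that error, and letting
   [del] decrease to [dH] gives the bound. *)

From Pilot Require Import Defs.
From mathcomp Require Import ssreflect ssrfun ssrbool eqtype ssrnat seq fintype bigop.
From Stdlib Require Import Reals Lra Classical ClassicalEpsilon FunctionalExtensionality.
Set Implicit Arguments.
Unset Strict Implicit.
Local Open Scope R_scope.

Ltac vec_ext := apply functional_extensionality => ?; rewrite /vsub /vadd /vscale /vzero /=; ring.

Lemma big_add (I : Type) (r : seq I) (P : pred I) (F G : I -> R) :
  \big[Rplus/0]_(i <- r | P i) (F i + G i) =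
  \big[Rplus/0]_(i <- r | P i) F i + \big[Rplus/0]_(i <- r | P i) G i.
Proof. exact: big_split. Qed.

Lemma big_scale (I : Type) (r : seq I) (P : pred I) (F : I -> R) c :
  \big[Rplus/0]_(i <- r | P i) (c * F i) = c * \big[Rplus/0]_(i <- r | P i) F i.
Proof.
apply: (big_ind2 (fun a b => a = c * b)); [ring | by move=> ? ? ? ? -> ->; ring | by []].
Qed.

Lemma big_ge0 (I : Type) (r : seq I) (P : pred I) (F : I -> R) :
  (forall i, P i -> 0 <= F i) -> 0 <= \big[Rplus/0]_(i <- r | P i) F i.
Proof. by move=> H; apply: (big_ind (fun a => 0 <= a)) => //; [lra | move=> ? ? ? ?; lra]. Qed.

Section Dot.
Variable n : nat.
Implicit Types u v w : vec n.

Lemma dotC u v : dot u v = dot v u.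
Proof. by rewrite /dot; apply: eq_bigr => i _; ring. Qed.

Lemma dotDl u v w : dot (vadd u v) w = dot u w + dot v w.
Proof. by rewrite /dot -big_add; apply: eq_bigr => i _; rewrite /vadd; ring. Qed.

Lemma dotZl c u w : dot (vscale c u) w = c * dot u w.
Proof. by rewrite /dot -big_scale; apply: eq_bigr => i _; rewrite /vscale; ring. Qed.

Lemma dotBl u v w : dot (vsub u v) w = dot u w - dot v w.
Proof.
have -> : vsub u v = vadd u (vscale (-1) v) by vec_ext.
by rewrite dotDl dotZl; ring.
Qed.

Lemma dotDr u v w : dot w (vadd u v) = dot w u + dot w v.
Proof. by rewrite dotC dotDl !(dotC w). Qed.

Lemma dotBr u v w : dot w (vsub u v) = dot w u - dot w v.
Proof. by rewrite dotC dotBl !(dotC w). Qed.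

Lemma dotZr c u w : dot w (vscale c u) = c * dot w u.
Proof. by rewrite dotC dotZl (dotC w). Qed.

Lemma dot0l u : dot vzero u = 0.
Proof. by rewrite /dot big1 // => i _; rewrite /vzero; ring. Qed.

Lemma dot_ge0 u : 0 <= dot u u.
Proof. by apply: big_ge0 => i _; nra. Qed.

Lemma dot_orthD u v : dot u v = 0 -> dot (vadd u v) (vadd u v) = dot u u + dot v v.
Proof. by move=> uv; rewrite !dotDl !dotDr (dotC v u) uv; ring. Qed.

Lemma dot_sq_le u v : dot u v * dot u v <= dot u u * dot v v.
Proof.
set p := dot u v; set a := dot u u; set b := dot v v.
have quad t : 0 <= a - 2 * t * p + t * t * b.
  have := dot_ge0 (vsub u (vscale t v)).
  by rewrite !dotBl !dotBr !dotZl !dotZr (dotC v u) -/p -/a -/b; lra.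
have a0 : 0 <= a by apply: dot_ge0.
have [b0 | bpos] : b = 0 \/ 0 < b by have := dot_ge0 v; rewrite -/b; lra.
- (* with [b = 0] the quadratic is affine in [t], so its slope [p] vanishes *)
  have := quad ((a + 1) / (2 * p)); have := quad (- (a + 1) / (2 * p)).
  rewrite b0; case: (Req_dec p 0) => [-> | p0]; first by lra.
  have -> : a - 2 * ((a + 1) / (2 * p)) * p + (a + 1) / (2 * p) * ((a + 1) / (2 * p)) * 0 = -1
    by field.
  lra.
- have := quad (p / b).
  have -> : a - 2 * (p / b) * p + p / b * (p / b) * b = (a * b - p * p) / b by field; lra.
  move=> h; have := Rmult_le_compat_r b _ _ (Rlt_le _ _ bpos) h.
  have -> : (a * b - p * p) / b * b = a * b - p * p by field; lra.
  lra.
Qed.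

Lemma vnorm_ge0 u : 0 <= vnorm u.
Proof. exact: sqrt_pos. Qed.

Lemma vnorm_mul_self u : vnorm u * vnorm u = dot u u.
Proof. by rewrite /vnorm sqrt_sqrt //; apply: dot_ge0. Qed.

Lemma Rabs_dot_le u v : Rabs (dot u v) <= vnorm u * vnorm v.
Proof.
rewrite /vnorm -sqrt_mult; try exact: dot_ge0.
by rewrite -sqrt_Rsqr_abs; apply: sqrt_le_1_alt; apply: dot_sq_le.
Qed.

Lemma dot_le u v : dot u v <= vnorm u * vnorm v.
Proof. by have := Rabs_dot_le u v; have := Rle_abs (dot u v); lra. Qed.

Lemma vnorm_le_of_sq u c : 0 <= c -> dot u u <= c * c -> vnorm u <= c.
Proof. by move=> c0 h; rewrite /vnorm -(sqrt_square c) //; apply: sqrt_le_1_alt. Qed.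

Lemma vnorm_addle u v : vnorm (vadd u v) <= vnorm u + vnorm v.
Proof.
apply: vnorm_le_of_sq; first by have := vnorm_ge0 u; have := vnorm_ge0 v; lra.
by rewrite !dotDl !dotDr (dotC v u) -!vnorm_mul_self; have := dot_le u v; nra.
Qed.

Lemma vnorm_suble u v : vnorm (vsub u v) <= vnorm u + vnorm v.
Proof.
apply: vnorm_le_of_sq; first by have := vnorm_ge0 u; have := vnorm_ge0 v; lra.
rewrite !dotBl !dotBr (dotC v u) -!vnorm_mul_self.
by have := Rabs_dot_le u v; have := Rle_abs (- dot u v); rewrite Rabs_Ropp; nra.
Qed.

Lemma vnormZ c u : vnorm (vscale c u) = Rabs c * vnorm u.
Proof.
rewrite /vnorm dotZl dotZr -Rmult_assoc sqrt_mult; [by rewrite -sqrt_Rsqr_abs | nra | exact: dot_ge0].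
Qed.

Lemma vnorm_subC u v : vnorm (vsub u v) = vnorm (vsub v u).
Proof.
have -> : vsub u v = vscale (-1) (vsub v u) by vec_ext.
by rewrite vnormZ Rabs_Ropp Rabs_R1; ring.
Qed.

Lemma vsubv0 u : vsub u vzero = u.
Proof. by vec_ext. Qed.

End Dot.

Lemma Rle_of_mul_self_le a b : 0 <= a -> 0 <= b -> a * a <= a * b -> a <= b.
Proof. by move=> a0 b0 h; nra. Qed.

Definition span n m (e : 'I_m -> vec n) (c : 'I_m -> R) : vec n :=
  fun k => \big[Rplus/0]_(i < m) (c i * e i k).

Lemma dot_spanl n m (e : 'I_m -> vec n) c w :
  dot (span e c) w = \big[Rplus/0]_(i < m) (c i * dot (e i) w).
Proof.
rewrite /dot /span.
under eq_bigr => k _ do rewrite Rmult_comm -big_scale.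
rewrite exchange_big /=; apply: eq_bigr => i _.
by rewrite -big_scale; apply: eq_bigr => k _; ring.
Qed.

Lemma span0 n m (e : 'I_m -> vec n) : span e (fun _ => 0) = vzero.
Proof. by apply: functional_extensionality => k; rewrite /span big1 // => i _; ring. Qed.

Lemma spanB n m (e : 'I_m -> vec n) c c' :
  vsub (span e c) (span e c') = span e (fun i => c i - c' i).
Proof.
apply: functional_extensionality => k; rewrite /vsub /span.
have opp : \big[Rplus/0]_(i < m) (-1 * (c' i * e i k)) = -1 * \big[Rplus/0]_(i < m) (c' i * e i k).
  exact: big_scale.
have -> : \big[Rplus/0]_(i < m) ((c i - c' i) * e i k) =
    \big[Rplus/0]_(i < m) (c i * e i k) + \big[Rplus/0]_(i < m) (-1 * (c' i * e i k)).
  by rewrite -big_add; apply: eq_bigr => i _; ring.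
by rewrite opp; ring.
Qed.

Lemma spanZ n m (e : 'I_m -> vec n) c a : vscale a (span e c) = span e (fun i => a * c i).
Proof.
by apply: functional_extensionality => k; rewrite /vscale /span -big_scale; apply: eq_bigr => i _; ring.
Qed.

Section Subspace.
Variables (n m : nat) (U : vec n -> Prop).
Hypothesis HU : subspace_dim m U.

Lemma subspace0 : U vzero.
Proof. by case: HU => e [_ He]; apply/He; exists (fun _ => 0); rewrite -(span0 e). Qed.

Lemma subspaceZ c v : U v -> U (vscale c v).
Proof. by case: HU => e [_ He] /He [cv ->]; apply/He; eexists; apply: spanZ. Qed.

Lemma subspaceB a b : U a -> U b -> U (vsub a b).
Proof. by case: HU => e [_ He] /He [ca ->] /He [cb ->]; apply/He; eexists; apply: spanB. Qed.

(* The projection is the Fourier sum over the orthonormal frame. *)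
Lemma orth_proj_exists v : exists p, orth_proj U v p.
Proof.
case: HU => e [eON He].
exists (span e (fun i => dot v (e i))); split; first by apply/He; eexists.
move=> u /He [c ->]; rewrite dot_spanl big1 // => j _.
rewrite dotBr (dotC (e j) (span _ _)) dot_spanl.
under eq_bigr => i _ do rewrite eON.
rewrite (bigD1 j) //= eqxx big1; last by move=> i /negbTE ->; ring.
by rewrite dotC; ring.
Qed.

End Subspace.

Lemma orth_proj_min_dist n (U : vec n -> Prop) v p eta :
  orth_proj U v p -> U eta -> vnorm (vsub v p) <= vnorm (vsub v eta).
Proof.
move=> [Up Op] Ueta.
apply: Rle_of_mul_self_le; try exact: vnorm_ge0.
rewrite vnorm_mul_self.
have -> : dot (vsub v p) (vsub v p) = dot (vsub v p) (vsub v eta).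
  by rewrite !dotBr (dotC _ p) (dotC _ eta) Op // Op.
exact: dot_le.
Qed.

Definition approx_in n (U V : vec n -> Prop) (eps : R) : Prop :=
  forall u, U u -> exists eta, V eta /\ vnorm (vsub u eta) <= eps * vnorm u.

(* Write [P_U v - P_V v = g - k] with [g = P_U v - P_V (P_U v)] and
   [k = P_V v - P_V (P_U v)]: [g] is orthogonal to [V], [k] lies in [V],
   [|g| <= eps |P_U v|] and [|k| <= eps |v - P_U v|], so Pythagoras concludes. *)
Lemma angle_le_of_approx_in n m (U V : vec n -> Prop) eps :
  subspace_dim m V -> 0 <= eps -> approx_in U V eps -> approx_in V U eps ->
  angle_le U V eps.
Proof.
move=> HV eps0 UV VU v u1 u2 [Uu1 Ou1] [Vu2 Ou2].
have [pv Ppv] := orth_proj_exists HV u1; have [Vpv Opv] := Ppv.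
set g := vsub u1 pv; set k := vsub u2 pv; set p := vsub v u1.
have Vk : V k by apply: (subspaceB HV).
have g_le : vnorm g <= eps * vnorm u1.
  have [eta [Veta eta_le]] := UV u1 Uu1.
  exact: Rle_trans (orth_proj_min_dist Ppv Veta) eta_le.
have k_orth : dot k (vsub p k) = 0.
  have -> : vsub p k = vsub (vsub v u2) g by rewrite /p /k /g; vec_ext.
  by rewrite dotBr; move: (Ou2 k Vk) (Opv k Vk); rewrite -/g; lra.
have k_le : vnorm k <= eps * vnorm p.
  have [zeta [Uz z_le]] := VU k Vk.
  apply: Rle_of_mul_self_le; first exact: vnorm_ge0.
    by have := vnorm_ge0 p; nra.
  rewrite vnorm_mul_self.
  have -> : dot k k = dot (vsub k zeta) p.
    have := Ou1 zeta Uz; rewrite dotBr in k_orth; rewrite dotBl -/p; lra.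
  apply: Rle_trans (dot_le _ _) _.
  by have := vnorm_ge0 p; have := vnorm_ge0 k; nra.
have gk : dot g k = 0 by rewrite dotC; apply: Opv.
have v_sq : vnorm v * vnorm v = dot u1 u1 + dot p p.
  have -> : v = vadd u1 p by rewrite /p; vec_ext.
  by rewrite vnorm_mul_self dot_orthD //; apply: Ou1.
have -> : vsub u1 u2 = vsub g k by rewrite /g /k; vec_ext.
apply: vnorm_le_of_sq; first by have := vnorm_ge0 v; nra.
clearbody g k p; rewrite !dotBl !dotBr (dotC k g) gk.
have : dot g g <= eps * eps * dot u1 u1.
  by rewrite -!vnorm_mul_self; have := vnorm_ge0 g; nra.
have : dot k k <= eps * eps * dot p p.
  by rewrite -!vnorm_mul_self; have := vnorm_ge0 k; nra.
nra.
Qed.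

Lemma Rsup_lub (E : R -> Prop) : bound E -> (exists r, E r) -> is_lub E (Rsup E).
Proof.
move=> Eb En; apply: (epsilon_spec (inhabits 0) (fun l => _ -> is_lub E l)) => //.
by have [l El] := completeness E Eb En; exists l.
Qed.

Section Dist.
Variables (n : nat) (S : vec n -> Prop) (z : vec n).
Hypothesis S_nonempty : exists b, S b.

Let neg_dists := fun r => exists b, S b /\ - r = vnorm (vsub z b).

Let neg_dists_lub : is_lub neg_dists (- Defs.dist z S).
Proof.
rewrite /Defs.dist /Rinf Ropp_involutive; apply: Rsup_lub.
- by exists 0 => r [b [_ hb]]; have := vnorm_ge0 (vsub z b); lra.
- by have [b Sb] := S_nonempty; exists (- vnorm (vsub z b)), b; split => //; ring.
Qed.

Lemma dist_ge0 : 0 <= Defs.dist z S.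
Proof.
have [_ ub] := neg_dists_lub.
suff : - Defs.dist z S <= 0 by lra.
by apply: ub => r [b [_ hb]]; have := vnorm_ge0 (vsub z b); lra.
Qed.

Lemma dist_le b : S b -> Defs.dist z S <= vnorm (vsub z b).
Proof.
move=> Sb; have [ub _] := neg_dists_lub.
suff : - vnorm (vsub z b) <= - Defs.dist z S by lra.
by apply: ub; exists b; split => //; ring.
Qed.

Lemma dist_approx eps : 0 < eps -> exists b, S b /\ vnorm (vsub z b) < Defs.dist z S + eps.
Proof.
move=> eps0; apply: NNPP => none; have [_ lub] := neg_dists_lub.
suff : - Defs.dist z S <= - Defs.dist z S - eps by lra.
apply: lub => r [b [Sb hb]].
have : ~ vnorm (vsub z b) < Defs.dist z S + eps by move=> h; apply: none; exists b.
lra.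
Qed.

End Dist.

Lemma is_lub_dists n (A B : vec n -> Prop) d :
  (forall x, A x -> vnorm x <= d) -> (forall x, B x -> vnorm x <= d) ->
  (exists a, A a) -> (exists b, B b) ->
  is_lub (fun r => exists a, A a /\ r = Defs.dist a B) (Rsup (fun r => exists a, A a /\ r = Defs.dist a B)).
Proof.
move=> Ad Bd [a Aa] [b Bb]; apply: Rsup_lub; last by exists (Defs.dist a B), a.
exists (d + d) => r [a' [Aa' ->]].
apply: Rle_trans (dist_le a' (ex_intro _ b Bb) Bb) _; apply: Rle_trans (vnorm_suble _ _) _.
by have := Ad _ Aa'; have := Bd _ Bb; lra.
Qed.

Section Hausdorff.
Variables (n : nat) (S1 S2 : vec n -> Prop) (d : R).
Hypotheses (S1_bounded : forall x, S1 x -> vnorm x <= d)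
  (S2_bounded : forall x, S2 x -> vnorm x <= d).

Lemma dist_le_dH z : S1 z -> (exists b, S2 b) -> Defs.dist z S2 <= dH S1 S2.
Proof.
move=> S1z S2ne.
have [ub1 _] := is_lub_dists S1_bounded S2_bounded (ex_intro _ z S1z) S2ne.
have [ub2 _] := is_lub_dists S2_bounded S1_bounded S2ne (ex_intro _ z S1z).
have [b S2b] := S2ne.
have := ub1 (Defs.dist z S2) (ex_intro _ z (conj S1z erefl)).
have := ub2 (Defs.dist b S1) (ex_intro _ b (conj S2b erefl)).
have := dist_ge0 b (ex_intro _ z S1z).
by rewrite /dH; lra.
Qed.

Lemma dH_ge0 : (exists a, S1 a) -> (exists b, S2 b) -> 0 <= dH S1 S2.
Proof.
move=> [a S1a] S2ne.
by have := dist_le_dH S1a S2ne; have := dist_ge0 a S2ne; lra.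
Qed.

Lemma dH_approx z eps : S1 z -> (exists b, S2 b) -> 0 < eps ->
  exists w, S2 w /\ vnorm (vsub z w) < dH S1 S2 + eps.
Proof.
move=> S1z S2ne eps0; have [w [S2w zw]] := dist_approx z S2ne eps0.
by exists w; split => //; have := dist_le_dH S1z S2ne; lra.
Qed.

End Hausdorff.

Lemma dHC n (S1 S2 : vec n -> Prop) : dH S1 S2 = dH S2 S1.
Proof. by rewrite /dH; ring. Qed.

Lemma rpow_Rpower a p : 0 < a -> rpow a p = Rpower a p.
Proof. by move=> a0; rewrite /rpow; case: Rlt_dec. Qed.

Lemma rpow0 p : rpow 0 p = 0.
Proof. by rewrite /rpow; case: Rlt_dec => // h; lra. Qed.

Lemma Rpower_gt0 a p : 0 < Rpower a p.
Proof. exact: exp_pos. Qed.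

Lemma rpow_ge0 a p : 0 <= rpow a p.
Proof. by rewrite /rpow; case: Rlt_dec => h; [left; apply: Rpower_gt0 | right].  Qed.

Lemma rpow_le a b p : 0 <= a <= b -> 0 < p -> rpow a p <= rpow b p.
Proof.
move=> [a0 ab] p0; have [-> | apos] : a = 0 \/ 0 < a by lra.
  by rewrite rpow0; apply: rpow_ge0.
by rewrite !rpow_Rpower; try lra; apply: Rle_Rpower_l; lra.
Qed.

Lemma Rpower_ge_self r a : 0 < r < 1 -> 0 < a <= 1 -> r <= Rpower r a.
Proof.
move=> [r0 r1] [a0 a1].
have lnr : ln r < 0 by rewrite -ln_1; apply: ln_increasing.
rewrite /Rpower -{1}(exp_ln r) //.
have : ln r <= a * ln r by nra.
by case/Rle_lt_or_eq_dec => h; [left; apply: exp_increasing | rewrite -h; right].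
Qed.

Section Taylor.
Variables (n m : nat) (T : vec n -> Prop) (f : vec n -> vec n) (Df : vec n -> vec n -> vec n).
Hypotheses (HT : subspace_dim m T) (HD : forall xi, T xi -> has_derivative_on T f xi (Df xi)).

Lemma derivable_pt_lim_dot_line xi e t : T xi ->
  derivable_pt_lim (fun s => dot (f (vscale s xi)) e) t (dot (Df (vscale t xi) xi) e).
Proof.
move=> Txi eps eps0.
have Tt : T (vscale t xi) by apply: (subspaceZ HT).
have [Dlin Dapprox] := HD Tt.
set K := vnorm xi * vnorm e + 1.
have K0 : 0 < K by rewrite /K; have := vnorm_ge0 xi; have := vnorm_ge0 e; nra.
have [del [del0 Hdel]] := Dapprox (eps / K) (Rdiv_lt_0_compat _ _ eps0 K0).
have xi0 := vnorm_ge0 xi.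
have del'0 : 0 < del / (vnorm xi + 1) by apply: Rdiv_lt_0_compat; lra.
exists (mkposreal _ del'0) => s s0 /= s_lt.
have step : vsub (vscale (t + s) xi) (vscale t xi) = vscale s xi by vec_ext.
have Ts : T (vscale (t + s) xi) by apply: (subspaceZ HT).
have sxi : vnorm (vscale s xi) = Rabs s * vnorm xi by apply: vnormZ.
have near : vnorm (vsub (vscale (t + s) xi) (vscale t xi)) < del.
  rewrite step sxi.
  have : Rabs s * (vnorm xi + 1) < del.
    have := Rmult_lt_compat_r (vnorm xi + 1) _ _ ltac:(lra) s_lt.
    by have -> : del / (vnorm xi + 1) * (vnorm xi + 1) = del by field; lra.
  by have := Rabs_pos s; nra.
have Dscale : Df (vscale t xi) (vscale s xi) = vscale s (Df (vscale t xi) xi).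
  have := Dlin s 0 xi xi Txi Txi.
  have -> : vadd (vscale s xi) (vscale 0 xi) = vscale s xi by vec_ext.
  by move=> ->; vec_ext.
have := Hdel _ Ts near; rewrite step Dscale sxi => rem_le.
have -> : (dot (f (vscale (t + s) xi)) e - dot (f (vscale t xi)) e) / s
          - dot (Df (vscale t xi) xi) e
        = dot (vsub (vsub (f (vscale (t + s) xi)) (f (vscale t xi)))
                    (vscale s (Df (vscale t xi) xi))) e / s.
  by rewrite !dotBl dotZl; field.
have s_pos := Rabs_pos_lt _ s0.
rewrite /Rdiv Rabs_mult Rabs_inv -/(Rdiv _ _).
apply: (Rle_lt_trans _ (eps / K * (Rabs s * vnorm xi) * vnorm e / Rabs s)).
  apply: Rmult_le_compat_r; first by left; apply: Rinv_0_lt_compat.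
  by apply: Rle_trans (Rabs_dot_le _ _) _; apply: Rmult_le_compat_r => //; apply: vnorm_ge0.
have -> : eps / K * (Rabs s * vnorm xi) * vnorm e / Rabs s = eps * (vnorm xi * vnorm e / K)
  by field; lra.
have : vnorm xi * vnorm e / K < 1.
  apply: (Rmult_lt_reg_r K) => //.
  have -> : vnorm xi * vnorm e / K * K = vnorm xi * vnorm e by field; lra.
  by rewrite /K; lra.
have : 0 <= vnorm xi * vnorm e / K.
  by apply: Rmult_le_pos; [apply: Rmult_le_pos => //; apply: vnorm_ge0 | left; apply: Rinv_0_lt_compat].
nra.
Qed.

Variables (L alpha : R).
Hypotheses (L0 : 0 <= L) (alpha0 : 0 < alpha) (f0 : f vzero = vzero)
  (Df0 : forall h, T h -> Df vzero h = vzero)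
  (Df_holder : forall xi eta h, T xi -> T eta -> T h ->
     vnorm (vsub (Df xi h) (Df eta h)) <= L * rpow (vnorm (vsub xi eta)) alpha * vnorm h).

(* Mean value theorem for [s |-> <f (s xi), f xi>] on [[0, 1]]. *)
Lemma holder_taylor_bound xi : T xi -> vnorm (f xi) <= L * rpow (vnorm xi) alpha * vnorm xi.
Proof.
move=> Txi; set e := f xi.
have [c [mvt c01]] := MVT_cor2 _ _ 0 1 Rlt_0_1 (fun c _ => derivable_pt_lim_dot_line e c Txi).
have [one zero] : vscale 1 xi = xi /\ vscale 0 xi = vzero by split; vec_ext.
rewrite /= one zero f0 dot0l -/e in mvt.
have Tc : T (vscale c xi) by apply: (subspaceZ HT).
have T0 : T vzero by apply: (subspace0 HT).
have Dc_le : vnorm (vsub (Df (vscale c xi) xi) (Df vzero xi)) <= L * rpow (vnorm xi) alpha * vnorm xi.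
  apply: Rle_trans (Df_holder Tc T0 Txi) _.
  rewrite (_ : vsub (vscale c xi) vzero = vscale c xi) ?vnormZ ?Rabs_right; try lra; last by vec_ext.
  apply: Rmult_le_compat_r; first exact: vnorm_ge0.
  apply: Rmult_le_compat_l => //; apply: rpow_le => //.
  by have := vnorm_ge0 xi; nra.
apply: Rle_of_mul_self_le; first exact: vnorm_ge0.
  by apply: Rmult_le_pos; [apply: Rmult_le_pos => //; apply: rpow_ge0 | apply: vnorm_ge0].
have -> : vnorm e * vnorm e = dot (vsub (Df (vscale c xi) xi) (Df vzero xi)) e.
  by rewrite vnorm_mul_self Df0 // (_ : vsub _ vzero = Df (vscale c xi) xi); [lra | vec_ext].
apply: Rle_trans (dot_le _ _) _; rewrite (Rmult_comm (vnorm e)).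
by apply: Rmult_le_compat_r => //; apply: vnorm_ge0.
Qed.

End Taylor.

Lemma holder_term_le L alpha s c r : 0 <= L -> 0 < alpha <= 1 -> 1 <= c -> 0 < r ->
  0 <= s <= c * r -> L * rpow s alpha * s <= L * c ^ 2 * Rpower r alpha * r.
Proof.
move=> L0 [a0 a1] c1 r0 [s0 s_le].
have pow_le : rpow s alpha <= c * Rpower r alpha.
  apply: Rle_trans (rpow_le (conj s0 s_le) a0) _.
  rewrite rpow_Rpower; last by nra.
  rewrite -Rpower_mult_distr; try lra.
  apply: Rmult_le_compat_r; first by left; apply: Rpower_gt0.
  by have := Rle_Rpower c alpha 1 c1 a1; rewrite Rpower_1; lra.
have := rpow_ge0 s alpha; have := Rpower_gt0 r alpha.
have : L * rpow s alpha <= L * (c * Rpower r alpha) by apply: Rmult_le_compat_l.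
move=> ? ? ?.
have : L * rpow s alpha * s <= L * (c * Rpower r alpha) * (c * r).
  by apply: Rmult_le_compat => //; apply: Rmult_le_pos.
nra.
Qed.

Definition graph_chart n (S T : vec n -> Prop) (x : vec n) (Rr L alpha : R)
    (f : vec n -> vec n) (Df : vec n -> vec n -> vec n) : Prop :=
  (forall xi, T xi -> orthogonal_to T (f xi)) /\
  (forall xi, T xi -> has_derivative_on T f xi (Df xi)) /\
  (forall z, (S z /\ vnorm (vsub z x) < Rr) <->
             ((exists xi, T xi /\ z = vadd x (vadd xi (f xi))) /\ vnorm (vsub z x) < Rr)) /\
  f vzero = vzero /\
  (forall h, T h -> Df vzero h = vzero) /\
  (forall xi eta h, T xi -> T eta -> T h ->
     vnorm (vsub (Df xi h) (Df eta h)) <= L * rpow (vnorm (vsub xi eta)) alpha * vnorm h) /\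
  (forall xi eta, T xi -> T eta -> vnorm (vsub (f xi) (f eta)) <= vnorm (vsub xi eta)).

Lemma C1a_class_chart m n alpha Rr L d (S : vec n -> Prop) x :
  C1a_class m alpha Rr L d S -> S x ->
  subspace_dim m (tangent_space S x) /\
  exists f Df, graph_chart S (tangent_space S x) x Rr L alpha f Df.
Proof. by move=> [_ [_ charts]] Sx; exact: charts x Sx. Qed.

Section Chart.
Variables (n m : nat) (S T : vec n -> Prop) (x : vec n) (Rr L alpha : R)
  (f : vec n -> vec n) (Df : vec n -> vec n -> vec n).
Hypothesis chart : graph_chart S T x Rr L alpha f Df.

Lemma chart_point xi : subspace_dim m T -> T xi -> 2 * vnorm xi < Rr ->
  S (vadd x (vadd xi (f xi))) /\ vnorm (vsub (vadd x (vadd xi (f xi))) x) <= 2 * vnorm xi.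
Proof.
move=> HT Txi xi_lt; have [_ [_ [graph [f0 [_ [_ lip]]]]]] := chart.
have fxi : vnorm (f xi) <= vnorm xi by have := lip _ _ Txi (subspace0 HT); rewrite f0 !vsubv0.
have zx : vsub (vadd x (vadd xi (f xi))) x = vadd xi (f xi) by vec_ext.
have zx_le : vnorm (vadd xi (f xi)) <= 2 * vnorm xi by apply: Rle_trans (vnorm_addle _ _) _; lra.
rewrite zx; split=> //.
suff [] : S (vadd x (vadd xi (f xi))) /\ vnorm (vsub (vadd x (vadd xi (f xi))) x) < Rr by [].
by apply/graph; rewrite zx; split; [exists xi | lra].
Qed.

Lemma chart_preimage w : S w -> vnorm (vsub w x) < Rr ->
  exists eta, T eta /\ w = vadd x (vadd eta (f eta)) /\ vnorm eta <= vnorm (vsub w x).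
Proof.
move=> Sw wx; have [orth [_ [graph _]]] := chart.
have [[eta [Teta weq]] _] := proj1 (graph w) (conj Sw wx).
exists eta; split=> //; split=> //.
have -> : vsub w x = vadd eta (f eta) by rewrite weq; vec_ext.
rewrite /vnorm dot_orthD; last exact: orth.
by apply: sqrt_le_1_alt; have := dot_ge0 (f eta); lra.
Qed.

Lemma chart_taylor xi : subspace_dim m T -> 0 <= L -> 0 < alpha -> T xi ->
  vnorm (f xi) <= L * rpow (vnorm xi) alpha * vnorm xi.
Proof.
move=> HT L0 alpha0; have [_ [HD [_ [f0 [Df0 [holder _]]]]]] := chart.
exact: (holder_taylor_bound HT HD L0 alpha0 f0 Df0 holder).
Qed.

End Chart.

Lemma tangent_vector_near m n Rr L d alpha A (S1 S2 : vec n -> Prop) x y r xi :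
  0 < L -> 0 < alpha <= 1 -> 1 <= A ->
  C1a_class m alpha Rr L d S1 -> C1a_class m alpha Rr L d S2 ->
  S1 x -> S2 y -> 0 < r < 1 -> 4 * A * r < Rr ->
  dH S1 S2 < r * r -> vnorm (vsub x y) <= A * dH S1 S2 ->
  tangent_space S1 x xi -> vnorm xi = r ->
  exists eta, tangent_space S2 y eta /\
    vnorm (vsub xi eta) <= (L * (1 + (4 * A) ^ 2) + 2 * A) * Rpower r alpha * r.
Proof.
move=> L0 [a0 a1] A1 C1 C2 S1x S2y [r0 r1] rR dH_lt xy_le Txi xi_r.
have [T1 [f1 [Df1 chart1]]] := C1a_class_chart C1 S1x.
have [T2 [f2 [Df2 chart2]]] := C1a_class_chart C2 S2y.
have [_ [S1b _]] := C1; have [_ [S2b _]] := C2.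
have S1ne : exists a, S1 a by exists x.
have S2ne : exists b, S2 b by exists y.
have dH0 := dH_ge0 S1b S2b S1ne S2ne.
have [S1z zx] := chart_point chart1 T1 Txi ltac:(nra).
set z := vadd x (vadd xi (f1 xi)) in S1z zx.
have [w [S2w zw]] := dH_approx S1b S2b S1z S2ne (Rlt_Rminus _ _ dH_lt).
have wy : vnorm (vsub w y) <= 4 * A * r.
  have AdH : A * dH S1 S2 <= A * r by apply: Rmult_le_compat_l; nra.
  have rAr : r <= A * r by nra.
  have -> : vsub w y = vadd (vsub (vsub z x) (vsub z w)) (vsub x y) by vec_ext.
  apply: Rle_trans (vnorm_addle _ _) _.
  have := vnorm_suble (vsub z x) (vsub z w); nra.
have [eta [T2eta [weq eta_le]]] := chart_preimage chart2 S2w ltac:(lra).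
have f1_le : vnorm (f1 xi) <= L * 1 ^ 2 * Rpower r alpha * r.
  apply: Rle_trans (chart_taylor chart1 T1 (Rlt_le _ _ L0) a0 Txi) _.
  by rewrite xi_r; apply: holder_term_le; lra.
have f2_le : vnorm (f2 eta) <= L * (4 * A) ^ 2 * Rpower r alpha * r.
  apply: Rle_trans (chart_taylor chart2 T2 (Rlt_le _ _ L0) a0 T2eta) _.
  by apply: holder_term_le; try lra; split; [apply: vnorm_ge0 | lra].
exists eta; split=> //.
have -> : vsub xi eta = vadd (vsub (vsub (vsub z w) (vsub x y)) (f1 xi)) (f2 eta)
  by rewrite weq /z; vec_ext.
have rr : r * r <= Rpower r alpha * r.
  by apply: Rmult_le_compat_r; [lra | apply: Rpower_ge_self; lra].
apply: Rle_trans (vnorm_addle _ _) _.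
have := vnorm_suble (vsub (vsub z w) (vsub x y)) (f1 xi).
have := vnorm_suble (vsub z w) (vsub x y).
nra.
Qed.

(* Subspaces are cones: rescale [u] to the sphere of radius [r] and back. *)
Lemma approx_in_of_sphere n m k (U V : vec n -> Prop) r K :
  subspace_dim m U -> subspace_dim k V -> 0 < r ->
  (forall xi, U xi -> vnorm xi = r -> exists eta, V eta /\ vnorm (vsub xi eta) <= K * r) ->
  approx_in U V K.
Proof.
move=> HU HV r0 sphere u Uu.
have [u0 | upos] : vnorm u = 0 \/ 0 < vnorm u by have := vnorm_ge0 u; lra.
  by exists vzero; split; [apply: (subspace0 HV) | rewrite vsubv0 u0; lra].
have xi_r : vnorm (vscale (r / vnorm u) u) = r.
  by rewrite vnormZ Rabs_right; [field | left; apply: Rdiv_lt_0_compat]; lra.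
have [eta [Veta eta_le]] := sphere _ (subspaceZ HU _ Uu) xi_r.
exists (vscale (vnorm u / r) eta); split; first exact: (subspaceZ HV).
have -> : vsub u (vscale (vnorm u / r) eta) = vscale (vnorm u / r) (vsub (vscale (r / vnorm u) u) eta).
  by apply: functional_extensionality => i; rewrite /vsub /vscale; field; lra.
rewrite vnormZ Rabs_right; last by left; apply: Rdiv_lt_0_compat.
have : 0 < vnorm u / r by apply: Rdiv_lt_0_compat.
have -> : K * vnorm u = vnorm u / r * (K * r) by field; lra.
by move=> q; apply: Rmult_le_compat_l; lra.
Qed.

(* At scale [del > dH] one works on the sphere of radius [r = sqrt del],
   where [rpow del (alpha / 2) = r ^ alpha]. *)
Lemma tangent_space_approx_in m n Rr L d alpha A (S1 S2 : vec n -> Prop) x y del :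
  0 < Rr -> 0 < L -> 0 < alpha <= 1 -> 1 <= A ->
  C1a_class m alpha Rr L d S1 -> C1a_class m alpha Rr L d S2 ->
  S1 x -> S2 y -> dH S1 S2 < del -> del < Rr ^ 2 / (64 * A ^ 2) -> del < 1 ->
  vnorm (vsub x y) <= A * dH S1 S2 ->
  approx_in (tangent_space S1 x) (tangent_space S2 y)
    ((L * (1 + (4 * A) ^ 2) + 2 * A) * rpow del (alpha / 2)).
Proof.
move=> Rr0 L0 alpha01 A1 C1 C2 S1x S2y dH_lt del_R del1 xy_le.
have [_ [S1b _]] := C1; have [_ [S2b _]] := C2.
have dH0 := dH_ge0 S1b S2b (ex_intro _ x S1x) (ex_intro _ y S2y).
set r := sqrt del.
have r0 : 0 < r by apply: sqrt_lt_R0; lra.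
have rr : r * r = del by apply: sqrt_sqrt; lra.
have r1 : r < 1 by nra.
have rR : 4 * A * r < Rr.
  have : (8 * A * r) * (8 * A * r) < Rr * Rr.
    have -> : 8 * A * r * (8 * A * r) = 64 * A ^ 2 * del by rewrite -rr; ring.
    have -> : Rr * Rr = 64 * A ^ 2 * (Rr ^ 2 / (64 * A ^ 2)) by field; lra.
    by apply: Rmult_lt_compat_l => //; nra.
  nra.
have -> : rpow del (alpha / 2) = Rpower r alpha.
  rewrite rpow_Rpower; last lra.
  by rewrite /r -Rpower_sqrt; [rewrite Rpower_mult; congr Rpower; field | lra].
have [HT1 _] := C1a_class_chart C1 S1x; have [HT2 _] := C1a_class_chart C2 S2y.
apply: (approx_in_of_sphere HT1 HT2 r0) => xi Txi xi_r.
apply: (tangent_vector_near L0 alpha01 A1 C1 C2 S1x S2y _ rR) => //; lra.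
Qed.

Lemma le_rpow_of_forall_gt a c del M p : 0 <= del < M -> 0 < p -> 0 <= c ->
  (forall t, del < t < M -> a <= c * rpow t p) -> a <= c * rpow del p.
Proof.
move=> [del0 delM] p0 c0 bound.
set s := rpow del p; set b := Rpower M p.
have sb : s < b.
  rewrite /s /b; have [-> | dpos] : del = 0 \/ 0 < del by lra.
    by rewrite rpow0; apply: Rpower_gt0.
  by rewrite rpow_Rpower //; apply: Rlt_Rpower_l; lra.
apply: Rle_plus_epsilon => eps eps0.
set t := s + Rmin ((b - s) / 2) (eps / (c + 1)).
have gap0 : 0 < Rmin ((b - s) / 2) (eps / (c + 1)).
  by apply: Rmin_glb_lt; apply: Rdiv_lt_0_compat; lra.
have := Rmin_l ((b - s) / 2) (eps / (c + 1)); have := Rmin_r ((b - s) / 2) (eps / (c + 1)).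
rewrite -/t => gap_eps gap_b.
have s0 : 0 <= s by apply: rpow_ge0.
have t0 : 0 < t by rewrite /t; lra.
set t' := Rpower t (/ p).
have t'_pos : 0 < t' by apply: Rpower_gt0.
have pow_t' : rpow t' p = t.
  by rewrite rpow_Rpower // /t' Rpower_mult Rinv_l; [apply: Rpower_1 | lra].
have t'_gt : del < t'.
  apply: Rnot_le_lt => t'_le; have := rpow_le (conj (Rlt_le _ _ t'_pos) t'_le) p0.
  by rewrite pow_t' -/s /t; lra.
have t'_lt : t' < M.
  apply: Rnot_le_lt => M_le; have := rpow_le (conj (Rlt_le _ _ (Rle_lt_trans _ _ _ del0 delM)) M_le) p0.
  by rewrite pow_t' rpow_Rpower -/b; [rewrite /t; lra | lra].
have := bound t' (conj t'_gt t'_lt); rewrite pow_t' /t.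
have : c * (eps / (c + 1)) <= eps.
  have -> : c * (eps / (c + 1)) = eps * (c / (c + 1)) by field; lra.
  have : c / (c + 1) <= 1.
    by apply: (Rmult_le_reg_r (c + 1)); [lra | rewrite Rmult_1_l; field_simplify; lra].
  nra.
have := Rmult_le_compat_l c _ _ c0 gap_eps.
lra.
Qed.

Theorem mainTheorem7 (m n : nat) (Rr L d alpha A : R) (S1 S2 : vec n -> Prop)
    (x y : vec n) :
  0 < Rr -> 0 < L -> 0 < d -> 0 < alpha <= 1 -> 1 <= A ->
  C1a_class m alpha Rr L d S1 -> C1a_class m alpha Rr L d S2 ->
  dH S1 S2 < Rmin (Rmin (Rr ^ 2 / (64 * A ^ 2)) (rpow L (- 2 / alpha))) 1 ->
  S1 x -> S2 y -> vnorm (vsub x y) <= A * dH S1 S2 ->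
  angle_le (tangent_space S1 x) (tangent_space S2 y)
    ((L * (1 + (4 * A) ^ 2) + 2 * A) * rpow (dH S1 S2) (alpha / 2)).
Proof.
(* As [dH] may vanish, the
   bound is proved at every scale [del] in [(dH, M)] and passed to the limit. *)
move=> Rr0 L0 _ alpha01 A1 C1 C2 dH_lt S1x S2y xy_le v u1 u2 P1 P2.
have [_ [S1b _]] := C1; have [_ [S2b _]] := C2.
have dH0 := dH_ge0 S1b S2b (ex_intro _ x S1x) (ex_intro _ y S2y).
have [HT2 _] := C1a_class_chart C2 S2y.
set C := L * (1 + (4 * A) ^ 2) + 2 * A.
have C0 : 0 <= C by rewrite /C; nra.
set M := Rmin (Rr ^ 2 / (64 * A ^ 2)) 1.
have dH_M : dH S1 S2 < M.
  apply: Rmin_glb_lt; apply: Rlt_le_trans dH_lt _;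
    [apply: Rle_trans (Rmin_l _ _) _; apply: Rmin_l | apply: Rmin_r].
have swap t : C * rpow t (alpha / 2) * vnorm v = C * vnorm v * rpow t (alpha / 2) by ring.
rewrite swap; apply: (le_rpow_of_forall_gt (M := M)); try lra.
  by apply: Rmult_le_pos => //; apply: vnorm_ge0.
move=> del [dH_del del_M]; rewrite -swap.
have [del_R del1] : del < Rr ^ 2 / (64 * A ^ 2) /\ del < 1.
  by split; apply: Rlt_le_trans del_M _; [apply: Rmin_l | apply: Rmin_r].
apply: (angle_le_of_approx_in HT2 _ _ _ P1 P2).
- by apply: Rmult_le_pos => //; apply: rpow_ge0.
- exact: (tangent_space_approx_in Rr0 L0 alpha01 A1 C1 C2 S1x S2y).
- have yx : vnorm (vsub y x) <= A * dH S2 S1 by rewrite vnorm_subC dHC.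
  have dH_del' : dH S2 S1 < del by rewrite dHC.
  exact: (tangent_space_approx_in Rr0 L0 alpha01 A1 C2 C1 S2y S1x dH_del' del_R del1 yx).
Qed.
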